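(* Let $Q$ be a commutative A-loop. For $n\ge 0$ let $H_n(Q)=\{x\in Q : x^{2^n}=1\}$ and $H(Q)=\bigcup_{n\ge 0}H_n(Q)$. Then: (i) $H_{n+1}(Q)=\{x\in Q : x^2\in H_n(Q)\}$ for every $n\ge 0$; (ii) $H_{n+1}(Q)\supseteq H_n(Q)$ for every $n\ge 0$; (iii) $H_n(Q)$ is a normal subloop of $Q$ for every $n\ge 0$; (iv) $H(Q)$ is a normal subloop of $Q$.
   Context: A loop is a set with a binary operation and neutral element $1$ in which all left and right translations are bijections; $\mathrm{Inn}(Q)$ is the stabilizer of $1$ in the group generated by all translations. A commutative A-loop is a commutative loop all of whose inner mappings are automorphisms. Such loops are power-associative, so powers are unambiguous. A normal subloop is a subloop invariant under all inner mappings. *)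

From mathcomp Require Import ssreflect ssrfun ssrbool ssrnat.

Set Implicit Arguments.
Unset Strict Implicit.
Unset Printing Implicit Defensive.

Section Loops.
Variables (T : Type) (op : T -> T -> T) (e : T).

Definition is_loop : Prop :=
  [/\ (forall x, op e x = x), (forall x, op x e = x),
      (forall a, bijective (op a)) & (forall a, bijective (fun x => op x a))].

Inductive mlt : (T -> T) -> Prop :=
| mlt_L a : mlt (op a)
| mlt_R a : mlt (fun x => op x a)
| mlt_id : mlt id
| mlt_comp f g : mlt f -> mlt g -> mlt (f \o g)
| mlt_inv f g : mlt f -> cancel f g -> cancel g f -> mlt g.

Definition inner_mapping (f : T -> T) : Prop := mlt f /\ f e = e.

Definition commutative_A_loop : Prop :=
  [/\ is_loop, (forall x y, op x y = op y x) &
      (forall f, inner_mapping f -> forall x y, f (op x y) = op (f x) (f y))].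

(* Powers (unambiguous by power-associativity): x^0 = 1, x^(n+1) = x x^n. *)
Fixpoint lpow (x : T) (n : nat) : T :=
  match n with 0 => e | n'.+1 => op x (lpow x n') end.

Definition subloop (S : T -> Prop) : Prop :=
  [/\ S e, (forall a b, S a -> S b -> S (op a b)),
      (forall a b x, S a -> S b -> op a x = b -> S x) &
      (forall a b x, S a -> S b -> op x a = b -> S x)].

Definition normal_subloop (S : T -> Prop) : Prop :=
  subloop S /\ (forall f, inner_mapping f -> forall x, S x -> S (f x)).

Definition H_n (n : nat) (x : T) : Prop := lpow x (2 ^ n) = e.
Definition H_all (x : T) : Prop := exists n, H_n n x.

End Loops.

(* Squaring is not a homomorphism of a commutative A-loop, but it is one "up to
   a normal subloop S": using the automorphic inverse property
   (u t)^-1 = u^-1 t^-1 and x (x x)^-1 = x^-1, the inverse of a x is computed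
   in two ways as (a x) r, once with r = ((a x)(a x))^-1 and once with r in the
   coset of (x x)^-1 modulo S, provided a a lies in S.  Hence the preimage of S
   under squaring is again a normal subloop, and H_(n+1) is the preimage of H_n.
   Power associativity makes x^(2^(n+1)) = (x^2)^(2^n), and H is the union of
   the increasing chain H_0 <= H_1 <= ... *)

From mathcomp Require Import ssreflect ssrfun ssrbool ssrnat.
From Stdlib Require Import ClassicalEpsilon.

Set Implicit Arguments.
Unset Strict Implicit.
Unset Printing Implicit Defensive.

Section Loops.
Variables (T : Type) (op : T -> T -> T) (e : T).

Local Notation "x * y" := (op x y).

Definition ldiv (a b : T) : T := epsilon (inhabits b) (fun x => a * x = b).

Local Notation "a \ b" := (ldiv a b) (at level 40, left associativity).
Local Notation "x ^-1" := (x \ e).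

Lemma normal_subloop_ext (S S' : T -> Prop) :
  (forall x, S x <-> S' x) -> normal_subloop op e S -> normal_subloop op e S'.
Proof.
move=> SS' [[S1 SM SL SR] Sinn]; split; first split.
- exact/SS'.
- by move=> a b /SS' Sa /SS' Sb; apply/SS'/SM.
- by move=> a b x /SS' Sa /SS' Sb abx; apply/SS'/(SL a b).
- by move=> a b x /SS' Sa /SS' Sb xab; apply/SS'/(SR a b).
- by move=> f innf x /SS' Sx; apply/SS'/Sinn.
Qed.

Lemma chain_le (S : nat -> T -> Prop) :
  (forall n x, S n x -> S n.+1 x) -> forall m n x, m <= n -> S m x -> S n x.
Proof.
move=> Sinc m n x /subnK <-; elim: (n - m) => //= k IH Sx.
by rewrite addSn; apply/Sinc/IH.
Qed.

Lemma normal_subloop_chain_union (S : nat -> T -> Prop) :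
  (forall n x, S n x -> S n.+1 x) -> (forall n, normal_subloop op e (S n)) ->
  normal_subloop op e (fun x => exists n, S n x).
Proof.
move=> Sinc Snormal.
have common a b : (exists n, S n a) -> (exists n, S n b) ->
    exists n, S n a /\ S n b.
  move=> [m Sa] [n Sb]; exists (maxn m n).
  by split; [apply: chain_le Sinc _ _ _ (leq_maxl m n) Sa
             |apply: chain_le Sinc _ _ _ (leq_maxr m n) Sb].
split; first split.
- by exists 0; case: (Snormal 0) => [[]].
- move=> a b /common/[apply] -[n [Sa Sb]]; exists n.
  by case: (Snormal n) => [[_ SM _ _] _]; apply: SM.
- move=> a b x /common/[apply] -[n [Sa Sb]] abx; exists n.
  by case: (Snormal n) => [[_ _ SL _] _]; apply: (SL a b).
- move=> a b x /common/[apply] -[n [Sa Sb]] xab; exists n.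
  by case: (Snormal n) => [[_ _ _ SR] _]; apply: (SR a b).
- move=> f innf x [n Sx]; exists n.
  by case: (Snormal n) => _ Sinn; apply: Sinn.
Qed.

Section Loop.
Hypothesis Hloop : is_loop op e.

Lemma mul1q x : e * x = x.
Proof. by case: Hloop. Qed.

Lemma mulq1 x : x * e = x.
Proof. by case: Hloop. Qed.

Lemma mulI a : injective (op a).
Proof. by case: Hloop => _ _ bijL _; apply: bij_inj. Qed.

Lemma mul_ldiv a b : a * (a \ b) = b.
Proof.
apply: (epsilon_spec (inhabits b) (fun x => a * x = b)).
by case: Hloop => _ _ bijL _; case: (bijL a) => g _ gK; exists (g b).
Qed.

Lemma ldiv_mul a x : a \ (a * x) = x.
Proof. by apply: (@mulI a); rewrite mul_ldiv. Qed.

Lemma ldiv_unique a b x : a * x = b -> a \ b = x.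
Proof. by move<-; rewrite ldiv_mul. Qed.

Lemma ldiv1q w : e \ w = w.
Proof. by apply: ldiv_unique; rewrite mul1q. Qed.

Lemma mlt_ldiv a : mlt op (ldiv a).
Proof. by apply: (mlt_inv (mlt_L op a)) => x; rewrite ?ldiv_mul ?mul_ldiv. Qed.

Lemma morph_inv (f : T -> T) x :
  {morph f : a b / a * b} -> f e = e -> f x^-1 = (f x)^-1.
Proof. by move=> fM fe; apply/esym/ldiv_unique; rewrite -fM mul_ldiv. Qed.

Lemma normal_subloop_trivial : normal_subloop op e (fun x => x = e).
Proof.
split; first split => //.
- by move=> a b -> ->; rewrite mul1q.
- by move=> a b x -> ->; rewrite mul1q.
- by move=> a b x -> ->; rewrite mulq1.
- by move=> f [_ fe] x ->.
Qed.

Lemma H_n0 x : H_n op e 0 x <-> x = e.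
Proof. by rewrite /H_n expn0 /= mulq1. Qed.

Definition left_inner (x y z : T) : T := (x * y) \ (x * (y * z)).
Definition left_inner_inv (x y w : T) : T := y \ (x \ ((x * y) * w)).

Lemma mul_left_inner x y z : (x * y) * left_inner x y z = x * (y * z).
Proof. exact: mul_ldiv. Qed.

Lemma mul_left_inner_inv x y w : x * (y * left_inner_inv x y w) = (x * y) * w.
Proof. by rewrite /left_inner_inv !mul_ldiv. Qed.

Lemma left_innerK x y : cancel (left_inner x y) (left_inner_inv x y).
Proof. by move=> z; rewrite /left_inner_inv mul_left_inner !ldiv_mul. Qed.

Lemma left_inner_invK x y : cancel (left_inner_inv x y) (left_inner x y).
Proof. by move=> w; rewrite /left_inner mul_left_inner_inv ldiv_mul. Qed.

Lemma inner_mapping_left_inner x y : inner_mapping op e (left_inner x y).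
Proof.
split; last by rewrite /left_inner mulq1 -{2}(mulq1 (x * y)) ldiv_mul.
by apply: mlt_comp (mlt_ldiv _) (mlt_comp (mlt_L _ _) (mlt_L _ _)).
Qed.

Lemma inner_mapping_left_inner_inv x y : inner_mapping op e (left_inner_inv x y).
Proof.
split; last by rewrite /left_inner_inv mulq1 ldiv_mul -{2}(mulq1 y) ldiv_mul.
by apply: mlt_comp (mlt_ldiv _) (mlt_comp (mlt_ldiv _) (mlt_L _ _)).
Qed.

Section NormalSubloop.
Variable S : T -> Prop.
Hypothesis HS : normal_subloop op e S.

Lemma normal_inv w : S w^-1 <-> S w.
Proof.
case: HS => [[S1 _ SL SR] _]; split => Sw.
- by apply: (SR w^-1 e) => //; rewrite mul_ldiv.
- by apply: (SL w e) => //; rewrite mul_ldiv.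
Qed.

Lemma normal_left_inner x y z : S (left_inner x y z) <-> S z.
Proof.
case: HS => _ Sinn; split => Sz; last exact: Sinn (inner_mapping_left_inner x y) _ Sz.
by rewrite -(left_innerK x y z); apply: Sinn (inner_mapping_left_inner_inv x y) _ Sz.
Qed.

Lemma normal_left_inner_inv x y w : S (left_inner_inv x y w) <-> S w.
Proof. by rewrite -(normal_left_inner x y) left_inner_invK. Qed.

End NormalSubloop.

Section CommutativeALoop.
Hypothesis mulC : forall x y, x * y = y * x.
Hypothesis innerM : forall f, inner_mapping op e f -> {morph f : x y / x * y}.

Lemma left_innerM x y : {morph left_inner x y : z w / z * w}.
Proof. exact/innerM/inner_mapping_left_inner. Qed.

Lemma left_inner_id x y : left_inner x y x = x.
Proof. by rewrite /left_inner (mulC y x) (mulC x (x * y)) ldiv_mul. Qed.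

Lemma left_inner_lpow x y j : left_inner x y (lpow op e x j) = lpow op e x j.
Proof.
elim: j => [|j IH] /=; first by case: (inner_mapping_left_inner x y).
by rewrite left_innerM IH left_inner_id.
Qed.

Lemma lpowD x i j : lpow op e x (i + j) = lpow op e x i * lpow op e x j.
Proof.
elim: i => [|i IH] /=; first by rewrite mul1q.
by rewrite IH -mul_left_inner left_inner_lpow.
Qed.

Lemma lpowM x i j : lpow op e x (i * j)%N = lpow op e (lpow op e x i) j.
Proof. by elim: j => [|j IH] /=; rewrite ?muln0 // mulnS lpowD IH. Qed.

Lemma lpow2 x : lpow op e x 2 = x * x.
Proof. by rewrite /= mulq1. Qed.

(* The automorphism [left_inner x y] with y = x \ u fixes x^-1 and maps
   y to t^-1 and y \ x^-1 to u^-1; apply it to x^-1 = y * (y \ x^-1). *)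
Lemma invM u t : (u * t)^-1 = u^-1 * t^-1.
Proof.
set x := u * t; set y := x \ u; set f := left_inner x y.
have fM : {morph f : a b / a * b} by apply: left_innerM.
have fe : f e = e by case: (inner_mapping_left_inner x y).
have f_xV : f x^-1 = x^-1 by rewrite (morph_inv _ fM fe) /f left_inner_id.
have f_yV : f y^-1 = t by rewrite /f /left_inner !mul_ldiv mulq1 ldiv_mul.
have f_y : f y = t^-1.
  by apply/esym/ldiv_unique; rewrite mulC -f_yV -fM mul_ldiv.
have f_yxV : f (y \ x^-1) = u^-1 by rewrite /f /left_inner !mul_ldiv.
by rewrite -f_xV -[in LHS](mul_ldiv y x^-1) fM f_y f_yxV mulC.
Qed.

(* The automorphism [left_inner x x^-1] fixes x, hence x^-1. *)
Lemma mul_inv_sqr x : x * (x * x)^-1 = x^-1.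
Proof.
have := morph_inv x (left_innerM x x^-1)
  (proj2 (inner_mapping_left_inner x x^-1)).
by rewrite left_inner_id {1}/left_inner mul_ldiv ldiv1q -invM.
Qed.

Section NormalSubloop.
Variable S : T -> Prop.
Hypothesis HS : normal_subloop op e S.

(* Left cosets of a normal subloop multiply: r' is r transported by inner
   mappings and multiplied by an element of S. *)
Lemma normal_mul_coset a b s r : S s ->
  exists r', (a * s) * (b * r) = (a * b) * r' /\ (S r' <-> S r).
Proof.
move=> Ss; set p := a * s; set q := left_inner p b r; set r2 := left_inner b a s.
exists (r2 * left_inner_inv (a * b) r2 q); split.
  rewrite -(mul_left_inner p b r) -/q mul_left_inner_inv (mulC p b).
  by rewrite -(mul_left_inner b a s) (mulC b a).
have Sr2 : S r2 by apply/(normal_left_inner HS).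
case: HS => [[_ SM SL _] _]; split => [Sr'|Sr].
- rewrite -(normal_left_inner HS p b) -(normal_left_inner_inv HS (a * b) r2).
  exact: SL Sr2 Sr' _.
- by apply/SM/(normal_left_inner_inv HS)/(normal_left_inner HS).
Qed.

Lemma normal_sqr_mul a x :
  S (a * a) -> S ((a * x) * (a * x)) <-> S (x * x).
Proof.
move=> /(normal_inv HS)-Sa.
have [r' [Er' Sr']] := normal_mul_coset a x ((x * x)^-1) Sa.
have Er : r' = ((a * x) * (a * x))^-1.
  by apply: (@mulI (a * x)); rewrite -Er' !mul_inv_sqr -invM.
by rewrite -(normal_inv HS (_ * _)) -Er Sr' normal_inv.
Qed.

Lemma normal_sqr_preimage : normal_subloop op e (fun x => S (x * x)).
Proof.
have [[S1 _ _ _] Sinn] := HS; split; first split.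
- by rewrite mulq1.
- by move=> a b Saa Sbb; apply/(normal_sqr_mul b Saa).
- by move=> a b x Saa Sbb abx; rewrite -(normal_sqr_mul x Saa) abx.
- by move=> a b x Saa Sbb xab; rewrite -(normal_sqr_mul x Saa) mulC xab.
- by move=> f innf x Sxx; rewrite -(innerM innf); apply: Sinn.
Qed.

End NormalSubloop.

Lemma H_nS n x : H_n op e n.+1 x <-> H_n op e n (lpow op e x 2).
Proof. by rewrite /H_n expnS lpowM. Qed.

Lemma H_n_sub n x : H_n op e n x -> H_n op e n.+1 x.
Proof. by rewrite /H_n expnS mul2n -addnn lpowD => ->; rewrite mul1q. Qed.

Lemma normal_subloop_H_n n : normal_subloop op e (H_n op e n).
Proof.
elim: n => [|n IH].
  by apply: normal_subloop_ext normal_subloop_trivial => x; rewrite H_n0.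
by apply: normal_subloop_ext (normal_sqr_preimage IH) => x; rewrite H_nS lpow2.
Qed.

End CommutativeALoop.
End Loop.
End Loops.

Theorem theorem5p6 (T : Type) (op : T -> T -> T) (e : T)
  (HQ : commutative_A_loop op e) :
  [/\ (forall n x, H_n op e n.+1 x <-> H_n op e n (lpow op e x 2)),
      (forall n x, H_n op e n x -> H_n op e n.+1 x),
      (forall n, normal_subloop op e (H_n op e n))
    & normal_subloop op e (H_all op e)].
Proof.
case: HQ => Hloop mulC innerM; split.
- exact: H_nS Hloop mulC innerM.
- exact: H_n_sub Hloop mulC innerM.
- exact: normal_subloop_H_n Hloop mulC innerM.
- exact: normal_subloop_chain_union (H_n_sub Hloop mulC innerM)
    (normal_subloop_H_n Hloop mulC innerM).
Qed.
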